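(* Let $g_k$ denote the number of isomorphism classes of simple graphs on $k$ vertices. For every $n\ge 6$, there are at least $2g_{n-6}$ pairs of graphs $(G_1,G_2)$ of order $n$ which have the same Laplacian spectra but different Ihara zeta functions.
   Context: Graphs are finite and simple; the Laplacian is $L=D-A$. The Ihara zeta function of a graph with adjacency matrix $A$, degree matrix $D$, $n_G$ vertices and $m_G$ edges is $Z_G(t)=(1-t^2)^{n_G-m_G}\det(I-tA+t^2(D-I))^{-1}$ (equivalently the product $\prod_{[\gamma]}(1-t^{\ell(\gamma)})^{-1}$ over rotation classes of primitive closed geodesics). The null graph counts as the unique graph on $0$ vertices, so $g_0=1$. *)

From HB Require Import structures.
From mathcomp Require Import all_boot all_order all_algebra all_fingroup.
From mathcomp Require Import all_field.
Set Implicit Arguments. Unset Strict Implicit. Unset Printing Implicit Defensive.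
Import Order.TTheory GRing.Theory Num.Theory.
Local Open Scope ring_scope.

Definition graph (n : nat) := {ffun 'I_n * 'I_n -> bool}.

Definition adj n (G : graph n) (i j : 'I_n) : bool := G (i, j).

Definition simple_graph n (G : graph n) : bool :=
  [forall i, forall j, adj G i j == adj G j i] && [forall i, ~~ adj G i i].

Definition graph_iso n (G H : graph n) : bool :=
  [exists s : 'S_n, [forall i, forall j, adj H (s i) (s j) == adj G i j]].

Definition iso_class n (G : graph n) : {set graph n} :=
  [set H | simple_graph H && graph_iso G H].

Definition iso_classes n : {set {set graph n}} :=
  [set iso_class G | G in [set G : graph n | simple_graph G]].

Definition num_graphs (k : nat) : nat := #|iso_classes k|.

Definition deg n (G : graph n) (i : 'I_n) : nat := #|[set j | adj G i j]|.
Definition num_edges n (G : graph n) : nat :=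
  #|[set p : 'I_n * 'I_n | adj G p.1 p.2 && (p.1 < p.2)%N]|.

Definition adj_mx (R : pzRingType) n (G : graph n) : 'M[R]_n :=
  \matrix_(i, j) (adj G i j)%:R.
Definition deg_mx (R : pzRingType) n (G : graph n) : 'M[R]_n :=
  \matrix_(i, j) ((i == j)%:R * (deg G i)%:R).
Definition laplacian (R : pzRingType) n (G : graph n) : 'M[R]_n :=
  deg_mx R G - adj_mx R G.

(* Laplacian spectrum (eigenvalues with multiplicities) = the characteristic
   polynomial of L, taken over the algebraic complex numbers. *)
Definition lap_cospectral n (G1 G2 : graph n) : bool :=
  char_poly (laplacian algC G1) == char_poly (laplacian algC G2).

(* Ihara zeta function as a rational function in t, i.e. an element of the
   fraction field of Q[t]:
   Z_G(t) = (1-t^2)^(n-m) * det(I - tA + t^2(D - I))^(-1). *)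
Definition ihara_det n (G : graph n) : {poly rat} :=
  \det (\matrix_(i, j)
          ((i == j)%:R - 'X * (adj G i j)%:R
           + 'X ^+ 2 * ((i == j)%:R * (deg G i)%:R - (i == j)%:R)) : 'M[{poly rat}]_n).

Definition ihara_zeta n (G : graph n) : {fraction {poly rat}} :=
  (tofrac (1 - 'X ^+ 2 : {poly rat})) ^ ((n%:Z - (num_edges G)%:Z)%R)
  / tofrac (ihara_det G).

(* unordered pairs {[G1],[G2]} of isomorphism classes of simple graphs of
   order n with the same Laplacian spectrum and different Ihara zeta
   functions (both properties are isomorphism invariants) *)
Definition lap_cospec_zeta_pairs n : {set {set {set graph n}}} :=
  [set S : {set {set graph n}} |
     [exists G1 : graph n, exists G2 : graph n,
        [&& simple_graph G1, simple_graph G2,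
            S == [set iso_class G1; iso_class G2],
            lap_cospectral G1 G2 & ihara_zeta G1 != ihara_zeta G2]]].

(* Glue onto a graph H on n - 6 vertices one of two pairs (X_b, Y_b) of graphs on 6
   vertices.  X_b and Y_b have conjugate integer Laplacians (an explicit intertwiner P
   with Q P = 4 I is checked), the same number of edges, and X_b has no vertex of degree 1
   while Y_b has one.  Laplacian characteristic polynomials and Ihara determinants
   det(I - tA + t^2(D - I)) are multiplicative over disjoint unions, and the coefficient
   of t^(2n) of the latter is prod_v (deg v - 1), which vanishes exactly when there is a
   leaf; so H + X_b and H + Y_b are Laplacian-cospectral with different zeta functions.
   The resulting 2 g_(n-6) pairs of classes are distinct: the number of edges between two
   vertices of degree 2 is an additive invariant separating X_b from Y_b and the two pairs
   from each other, and a common summand cancels from isomorphic disjoint unions. *)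

From mathcomp Require Import all_boot all_order all_algebra all_fingroup all_field.
From mathcomp Require Import zify.
Set Implicit Arguments. Unset Strict Implicit. Unset Printing Implicit Defensive.
Import GRing.Theory Num.Theory.

(** * Disjoint union *)

Definition dunion k m (H : graph k) (X : graph m) : graph (k + m) :=
  [ffun p => match split p.1, split p.2 with
             | inl a, inl b => H (a, b)
             | inr a, inr b => X (a, b)
             | _, _ => false
             end].

Lemma degE n (G : graph n) i : deg G i = \sum_j adj G i j.
Proof. by rewrite /deg -sum1_card big_mkcond; apply: eq_bigr => j _; rewrite inE. Qed.

Section DisjointUnion.
Variables (k m : nat) (H : graph k) (X : graph m).

Lemma adj_dunion_ll a b : adj (dunion H X) (lshift m a) (lshift m b) = adj H a b.
Proof. by rewrite /adj ffunE /= !(unsplitK (inl _ _)). Qed.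

Lemma adj_dunion_rr a b : adj (dunion H X) (rshift k a) (rshift k b) = adj X a b.
Proof. by rewrite /adj ffunE /= !(unsplitK (inr _ _)). Qed.

Lemma adj_dunion_lr a b : adj (dunion H X) (lshift m a) (rshift k b) = false.
Proof. by rewrite /adj ffunE /= (unsplitK (inl _ _)) (unsplitK (inr _ _)). Qed.

Lemma adj_dunion_rl a b : adj (dunion H X) (rshift k a) (lshift m b) = false.
Proof. by rewrite /adj ffunE /= (unsplitK (inl _ _)) (unsplitK (inr _ _)). Qed.

Lemma adj_dunion_cross (u v : 'I_(k + m)) :
  (u < k) != (v < k) -> adj (dunion H X) u v = false.
Proof.
case: (split_ordP u) => a ->; case: (split_ordP v) => b -> //= _.
  exact: adj_dunion_lr.
exact: adj_dunion_rl.
Qed.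

Lemma deg_dunion_l a : deg (dunion H X) (lshift m a) = deg H a.
Proof.
rewrite !degE big_split_ord /= [X in _ + X]big1 ?addn0 => [|j _];
  last by rewrite adj_dunion_lr.
by apply: eq_bigr => j _; rewrite adj_dunion_ll.
Qed.

Lemma deg_dunion_r a : deg (dunion H X) (rshift k a) = deg X a.
Proof.
rewrite !degE big_split_ord /= [X in X + _]big1 ?add0n => [|j _];
  last by rewrite adj_dunion_rl.
by apply: eq_bigr => j _; rewrite adj_dunion_rr.
Qed.

End DisjointUnion.

Lemma adj_dunion_right k m (H H' : graph k) (X : graph m) (u v : 'I_(k + m)) :
  ~~ (u < k) -> ~~ (v < k) -> adj (dunion H X) u v = adj (dunion H' X) u v.
Proof.
case: (split_ordP u) => // a -> _; case: (split_ordP v) => // b -> _.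
by rewrite !adj_dunion_rr.
Qed.

Lemma simple_dunion k m (H : graph k) (X : graph m) :
  simple_graph H -> simple_graph X -> simple_graph (dunion H X).
Proof.
case/andP=> /forallP sym_H /forallP irr_H /andP[/forallP sym_X /forallP irr_X].
apply/andP; split; apply/forallP => u; last first.
  by case: (split_ordP u) => a ->; rewrite ?adj_dunion_ll ?adj_dunion_rr.
apply/forallP => v; case: (split_ordP u) => a ->; case: (split_ordP v) => b ->;
  rewrite ?adj_dunion_ll ?adj_dunion_rr ?adj_dunion_lr ?adj_dunion_rl //.
  exact: (forallP (sym_H a) b).
exact: (forallP (sym_X a) b).
Qed.

Definition edges_by_deg (w : rel nat) n (G : graph n) : nat :=
  #|[set p : 'I_n * 'I_n | adj G p.1 p.2 && w (deg G p.1) (deg G p.2)]|.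

Lemma card_arcs n (G : graph n) :
  #|[set p | adj G p.1 p.2]| = edges_by_deg (fun _ _ => true) G.
Proof. by apply: eq_card => p; rewrite !inE andbT. Qed.

Lemma card_pairs n (P : pred ('I_n * 'I_n)) :
  #|[set p | P p]| = \sum_i \sum_j P (i, j).
Proof.
by rewrite pair_big -sum1_card big_mkcond; apply: eq_bigr => -[i j] _; rewrite inE.
Qed.

Lemma double_sum_split_ord k m (F : 'I_(k + m) -> 'I_(k + m) -> nat) :
  (forall a b, F (lshift m a) (rshift k b) = 0) ->
  (forall a b, F (rshift k a) (lshift m b) = 0) ->
  \sum_i \sum_j F i j =
  \sum_i \sum_j F (lshift m i) (lshift m j) + \sum_i \sum_j F (rshift k i) (rshift k j).
Proof.
move=> F_lr F_rl; rewrite big_split_ord /=; congr (_ + _); apply: eq_bigr => i _.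
  by rewrite big_split_ord /= [X in _ + X]big1 ?addn0.
by rewrite big_split_ord /= [X in X + _]big1 ?add0n.
Qed.

Lemma edges_by_deg_dunion w k m (H : graph k) (X : graph m) :
  edges_by_deg w (dunion H X) = edges_by_deg w H + edges_by_deg w X.
Proof.
rewrite /edges_by_deg !card_pairs double_sum_split_ord => [|a b|a b];
  rewrite ?adj_dunion_lr ?adj_dunion_rl //.
by congr (_ + _); apply: eq_bigr => i _; apply: eq_bigr => j _;
  rewrite ?adj_dunion_ll ?adj_dunion_rr ?deg_dunion_l ?deg_dunion_r.
Qed.

Lemma num_edges_dunion k m (H : graph k) (X : graph m) :
  num_edges (dunion H X) = num_edges H + num_edges X.
Proof.
rewrite /num_edges !card_pairs double_sum_split_ord => [|a b|a b];
  rewrite ?adj_dunion_lr ?adj_dunion_rl //.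
by congr (_ + _); apply: eq_bigr => i _; apply: eq_bigr => j _;
  rewrite ?adj_dunion_ll ?adj_dunion_rr //= ltn_add2l.
Qed.

Definition deg2_edges n (G : graph n) :=
  edges_by_deg (fun d e => (d == 2) && (e == 2)) G.

Lemma deg2_edges_dunion k m (H : graph k) (X : graph m) :
  deg2_edges (dunion H X) = deg2_edges H + deg2_edges X.
Proof. exact: edges_by_deg_dunion. Qed.

(** * Isomorphism invariants and cancellation *)

Lemma graph_isoP n (G H : graph n) :
  reflect (exists s : 'S_n, forall i j, adj H (s i) (s j) = adj G i j) (graph_iso G H).
Proof.
apply: (iffP existsP) => -[s iso_s]; exists s.
  by move=> i j; apply/eqP; exact: (forallP (forallP iso_s i) j).
by apply/forallP => i; apply/forallP => j; rewrite iso_s.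
Qed.

Lemma graph_iso_refl n (G : graph n) : graph_iso G G.
Proof. by apply/graph_isoP; exists 1%g => i j; rewrite !perm1. Qed.

Lemma graph_iso_sym n (G H : graph n) : graph_iso G H -> graph_iso H G.
Proof.
by case/graph_isoP=> s iso_s; apply/graph_isoP; exists s^-1%g => i j; rewrite -iso_s !permKV.
Qed.

Lemma graph_iso_trans n (G H K : graph n) :
  graph_iso G H -> graph_iso H K -> graph_iso G K.
Proof.
case/graph_isoP=> s iso_s /graph_isoP[t iso_t].
by apply/graph_isoP; exists (s * t)%g => i j; rewrite !permM iso_t iso_s.
Qed.

Lemma deg_perm n (G H : graph n) (s : 'S_n) :
  (forall i j, adj H (s i) (s j) = adj G i j) -> forall i, deg H (s i) = deg G i.
Proof.
move=> iso_s i; rewrite !degE (reindex_inj (@perm_inj _ s)) /=.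
by apply: eq_bigr => j _; rewrite iso_s.
Qed.

Lemma edges_by_deg_iso w n (G H : graph n) :
  graph_iso G H -> edges_by_deg w G = edges_by_deg w H.
Proof.
case/graph_isoP=> s iso_s; rewrite /edges_by_deg !card_pairs.
rewrite [RHS](reindex_inj (@perm_inj _ s)); apply: eq_bigr => i _.
rewrite [RHS](reindex_inj (@perm_inj _ s)); apply: eq_bigr => j _.
by rewrite /= iso_s !(deg_perm iso_s).
Qed.

Lemma iso_class_eq n (G H : graph n) : graph_iso G H -> iso_class G = iso_class H.
Proof.
move=> GH; apply/setP => K; rewrite !inE; case: (simple_graph K) => //=.
apply/idP/idP => [GK | HK]; first exact: graph_iso_trans (graph_iso_sym GH) GK.
exact: graph_iso_trans GH HK.
Qed.

Lemma iso_class_iso n (G H : graph n) :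
  simple_graph G -> iso_class G = iso_class H -> graph_iso H G.
Proof.
move=> simG eq_GH; have : G \in iso_class G by rewrite inE simG graph_iso_refl.
by rewrite eq_GH inE => /andP[].
Qed.

Lemma deg2_edges_iso n (G H : graph n) : graph_iso G H -> deg2_edges G = deg2_edges H.
Proof. exact: edges_by_deg_iso. Qed.

Lemma inj_rel_morph_eq (T : finType) (f : T -> T) (E E' : rel T) :
  injective f -> (forall a b, E a b -> E' (f a) (f b)) ->
  #|[set p | E' p.1 p.2]| <= #|[set p | E p.1 p.2]| ->
  forall a b, E' (f a) (f b) = E a b.
Proof.
move=> inj_f morph_f card_E' a b; pose fE := [set (f p.1, f p.2) | p in [set p | E p.1 p.2]].
have inj_f2 : injective (fun p : T * T => (f p.1, f p.2)).
  by move=> [c d] [c' d'] [/inj_f-> /inj_f->].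
have fE_E' : fE = [set p | E' p.1 p.2].
  apply/eqP; rewrite eqEcard card_imset // card_E' andbT.
  by apply/subsetP => q /imsetP[p]; rewrite !inE => Ep ->; apply: morph_f.
apply/idP/idP => [E'ab | /morph_f //].
have : (f a, f b) \in fE by rewrite fE_E' inE.
by case/imsetP=> p; rewrite inE => Ep [/inj_f -> /inj_f ->].
Qed.

(* An isomorphism s of H + X onto H' + X maps H into H' through its first-return map to
   the H-block: along the orbit segment outside that block the two sides agree, so
   adjacency is carried over; counting arcs gives the converse. *)
Section Cancellation.
Variables (k m : nat) (H H' : graph k) (X : graph m) (s : 'S_(k + m)).
Hypothesis iso_s : forall u v, adj (dunion H' X) (s u) (s v) = adj (dunion H X) u v.

Lemma return_exists a : exists r, (0 < r) && ((s ^+ r)%g (lshift m a) < k).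
Proof. by exists #[s]%g; rewrite order_gt0 expg_order perm1 /= ltn_ord. Qed.

Definition return_time a := ex_minn (return_exists a).

Lemma return_time_gt0 a : 0 < return_time a.
Proof. by rewrite /return_time; case: ex_minnP => r /andP[]. Qed.

Lemma return_time_left a : (s ^+ return_time a)%g (lshift m a) < k.
Proof. by rewrite /return_time; case: ex_minnP => r /andP[]. Qed.

Lemma before_return a l :
  0 < l < return_time a -> ~~ ((s ^+ l)%g (lshift m a) < k).
Proof.
case/andP=> l_gt0; rewrite /return_time; case: ex_minnP => r _ r_min.
by apply: contraTN => left_l; rewrite -leqNgt r_min // l_gt0.
Qed.

Definition first_return a : 'I_k := Ordinal (return_time_left a).

Lemma lshift_first_return a :
  lshift m (first_return a) = (s ^+ return_time a)%g (lshift m a).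
Proof. exact: val_inj. Qed.

Lemma adj_iter_right u v n :
  (forall l, 0 < l <= n -> ~~ ((s ^+ l)%g u < k) && ~~ ((s ^+ l)%g v < k)) ->
  adj (dunion H' X) ((s ^+ n.+1)%g u) ((s ^+ n.+1)%g v) = adj (dunion H X) u v.
Proof.
elim: n => [|n IHn] right_uv; first by rewrite expg1 iso_s.
rewrite expgSr !permM iso_s.
have /andP[right_u right_v] := right_uv n.+1 (leqnn _).
rewrite (adj_dunion_right H H') // IHn // => l /andP[l_gt0 l_le].
by apply: right_uv; rewrite l_gt0 leqW.
Qed.

Lemma first_return_adj a b : adj H a b -> adj H' (first_return a) (first_return b).
Proof.
move=> Hab; have ra_gt0 := return_time_gt0 a; have rb_gt0 := return_time_gt0 b.
have adj_before n : n.+1 <= minn (return_time a) (return_time b) ->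
    adj (dunion H' X) ((s ^+ n.+1)%g (lshift m a)) ((s ^+ n.+1)%g (lshift m b)).
  rewrite leq_min => /andP[n_ra n_rb].
  rewrite adj_iter_right ?adj_dunion_ll // => l /andP[l_gt0 l_le].
  by rewrite !before_return // l_gt0 (leq_ltn_trans l_le).
case: (ltngtP (return_time a) (return_time b)) => r_ab.
- have := adj_before (return_time a).-1; rewrite prednK // (minn_idPl (ltnW r_ab)).
  move=> /(_ (leqnn _)); rewrite adj_dunion_cross // return_time_left.
  by rewrite (negbTE (before_return _)) // ra_gt0 r_ab.
- have := adj_before (return_time b).-1; rewrite prednK // (minn_idPr (ltnW r_ab)).
  move=> /(_ (leqnn _)); rewrite adj_dunion_cross // return_time_left.
  by rewrite (negbTE (before_return _)) // rb_gt0 r_ab.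
- have := adj_before (return_time a).-1; rewrite prednK // -r_ab minnn.
  move=> /(_ (leqnn _)); rewrite -lshift_first_return r_ab -lshift_first_return.
  by rewrite adj_dunion_ll.
Qed.

Lemma first_return_inj : injective first_return.
Proof.
suff lt_case a b : return_time a < return_time b ->
    lshift m (first_return a) <> lshift m (first_return b).
  move=> a b /(congr1 (lshift m)) eq_ab.
  case: (ltngtP (return_time a) (return_time b)) => r_ab.
  - by case: (lt_case a b r_ab).
  - by case: (lt_case b a r_ab).
  by move: eq_ab; rewrite !lshift_first_return r_ab => /perm_inj/lshift_inj.
move=> r_ab; rewrite !lshift_first_return -(subnK (ltnW r_ab)) expgD permM.
move=> /perm_inj eq_ab; have := @before_return b (return_time b - return_time a).
by rewrite -eq_ab /= ltn_ord subn_gt0 r_ab ltn_subrL !return_time_gt0 => /(_ isT).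
Qed.

End Cancellation.

Lemma dunion_cancel k m (H H' : graph k) (X : graph m) :
  graph_iso (dunion H X) (dunion H' X) -> graph_iso H H'.
Proof.
move=> iso_HX; have /graph_isoP[s iso_s] := iso_HX.
have card_H' : #|[set p | adj H' p.1 p.2]| <= #|[set p | adj H p.1 p.2]|.
  have := edges_by_deg_iso (fun _ _ => true) iso_HX.
  by rewrite !card_arcs !edges_by_deg_dunion => /addIn ->.
apply/graph_isoP; exists (perm (@first_return_inj _ _ s)) => a b; rewrite !permE.
exact: inj_rel_morph_eq (@first_return_inj _ _ s) (first_return_adj iso_s) card_H' a b.
Qed.

(** * Laplacian and Ihara determinant *)

Local Open Scope ring_scope.

Definition graph_mx (R : pzRingType) (F : bool -> nat -> bool -> R) n (G : graph n) :=
  \matrix_(i, j) F (i == j) (deg G i) (adj G i j) : 'M[R]_n.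

Lemma graph_mx_dunion (R : pzRingType) (F : bool -> nat -> bool -> R) k m
    (H : graph k) (X : graph m) :
  (forall d, F false d false = 0) ->
  graph_mx F (dunion H X) = block_mx (graph_mx F H) 0 0 (graph_mx F X).
Proof.
move=> F0; apply/matrixP => i j.
case: (split_ordP i) => a ->; case: (split_ordP j) => b ->.
- by rewrite block_mxEul !mxE eq_lshift deg_dunion_l adj_dunion_ll.
- by rewrite block_mxEur !mxE eq_lrshift adj_dunion_lr F0.
- by rewrite block_mxEdl !mxE eq_rlshift adj_dunion_rl F0.
- by rewrite block_mxEdr !mxE eq_rshift deg_dunion_r adj_dunion_rr.
Qed.

Lemma laplacianE (R : pzRingType) n (G : graph n) :
  laplacian R G = graph_mx (fun b d e => b%:R * d%:R - e%:R) G.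
Proof. by apply/matrixP => i j; rewrite !mxE. Qed.

Lemma char_poly_laplacian_dunion (R : comNzRingType) k m (H : graph k) (X : graph m) :
  char_poly (laplacian R (dunion H X)) =
  char_poly (laplacian R H) * char_poly (laplacian R X).
Proof.
rewrite !laplacianE graph_mx_dunion => [|d]; last by rewrite mul0r subr0.
by rewrite /char_poly char_block_diag_mx det_ublock.
Qed.

Definition ihara_entry (b : bool) (d : nat) (e : bool) : {poly rat} :=
  b%:R - 'X * e%:R + 'X ^+ 2 * (b%:R * d%:R - b%:R).

Lemma ihara_detE n (G : graph n) : ihara_det G = \det (graph_mx ihara_entry G).
Proof. by congr (\det _); apply/matrixP => i j; rewrite !mxE. Qed.

Lemma ihara_det_dunion k m (H : graph k) (X : graph m) :
  ihara_det (dunion H X) = ihara_det H * ihara_det X.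
Proof.
rewrite !ihara_detE graph_mx_dunion ?det_ublock // => d.
by rewrite /ihara_entry !(mulr0n, mulr0, mul0r, subr0, addr0).
Qed.

Lemma ihara_det_coef0 n (G : graph n) : (ihara_det G)`_0 = 1.
Proof.
rewrite ihara_detE -horner_coef0 -horner_evalE -det_map_mx -[RHS](det1 _ n).
congr (\det _); apply/matrixP => i j.
by rewrite !mxE /= horner_evalE !hornerE /= hornerMn hornerE.
Qed.

Lemma ihara_det_neq0 n (G : graph n) : ihara_det G != 0.
Proof. by apply: contra_neq (@oner_neq0 rat) => G0; rewrite -(ihara_det_coef0 G) G0 coef0. Qed.

Lemma coefM_top (R : nzSemiRingType) (p q : {poly R}) dp dq :
  (size p <= dp.+1)%N -> (size q <= dq.+1)%N -> (p * q)`_(dp + dq) = p`_dp * q`_dq.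
Proof.
move=> size_p size_q; have lt_dp : (dp < (dp + dq).+1)%N by rewrite ltnS leq_addr.
rewrite coefM (bigD1 (Ordinal lt_dp)) //= addKn big1 ?addr0 // => i.
rewrite -val_eqE neq_ltn /= => /orP[lt_i_dp | gt_i_dp].
  by rewrite [q`__]nth_default ?mulr0 // (leq_trans size_q) //; lia.
by rewrite nth_default ?mul0r // (leq_trans size_p).
Qed.

Section TopCoefficient.
Variables (R : comNzRingType) (d : nat).

Lemma size_prod_seq_leq I (r : seq I) (F : I -> {poly R}) :
  (forall i, (size (F i) <= d.+1)%N) -> (size (\prod_(i <- r) F i)%R <= (d * size r).+1)%N.
Proof.
move=> size_F; elim: r => [|a r IHr]; first by rewrite big_nil size_poly1.
rewrite big_cons (leq_trans (size_polyMleq _ _)) //.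
move: IHr (size_F a); rewrite /= mulnS.
by move: (size (F a)) (size _) => x y; lia.
Qed.

Lemma coef_prod_seq_top I (r : seq I) (F : I -> {poly R}) :
  (forall i, (size (F i) <= d.+1)%N) ->
  (\prod_(i <- r) F i)`_(d * size r) = \prod_(i <- r) (F i)`_d.
Proof.
move=> size_F; elim: r => [|a r IHr]; first by rewrite !big_nil muln0 coef1.
by rewrite !big_cons /= mulnS coefM_top ?IHr // size_prod_seq_leq.
Qed.

Lemma coef_det_top n (M : 'M[{poly R}]_n) :
  (forall i j, (size (M i j) <= d.+1)%N) ->
  (\det M)`_(d * n) = \det (\matrix_(i, j) (M i j)`_d).
Proof.
move=> size_M; have size_enum : size (index_enum 'I_n) = n.
  by rewrite [index_enum _]unlock -enumT -cardT card_ord.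
rewrite /determinant coef_sum; apply: eq_bigr => s _.
rewrite -[(-1) ^+ s : {poly R}](rmorph_sign (@polyC R)) coefCM.
have := coef_prod_seq_top (index_enum 'I_n) (fun i => size_M i (s i)).
by rewrite size_enum => ->; congr (_ * _); apply: eq_bigr => i _; rewrite mxE.
Qed.

End TopCoefficient.

Lemma ihara_entry_coef b d e l :
  (ihara_entry b d e)`_l =
  if l == 0%N then b%:R else if l == 1%N then - e%:R
  else if l == 2%N then b%:R * d%:R - b%:R else 0.
Proof.
rewrite coefD coefB coefXM coefXnM -!polyC_natr -polyCM -polyCB !coefC.
by case: l => [|[|[|l]]] /=; rewrite ?subr0 ?sub0r ?addr0 ?add0r.
Qed.

Lemma ihara_det_top n (G : graph n) :
  (ihara_det G)`_(2 * n) = \prod_i ((deg G i)%:R - 1 : rat).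
Proof.
rewrite ihara_detE coef_det_top => [|i j]; last first.
  by apply/leq_sizeP => l; rewrite mxE ihara_entry_coef; case: l => [|[|[|l]]].
rewrite [\det _](_ : _ = \det (diag_mx (\row_i ((deg G i)%:R - 1)))).
  by rewrite det_diag; apply: eq_bigr => i _; rewrite mxE.
congr (\det _); apply/matrixP => i j; rewrite !mxE ihara_entry_coef /=.
by case: eqP => [->|_]; rewrite ?(mulr1n, mul1r, mulr0n, mul0r, subr0).
Qed.

Lemma ihara_det_top_eq0 n (G : graph n) :
  ((ihara_det G)`_(2 * n) == 0) = [exists i, deg G i == 1%N].
Proof.
rewrite ihara_det_top prodf_seq_eq0; apply/hasP/existsP => -[i]; last first.
  by move=> /eqP deg_i; exists i; rewrite ?mem_index_enum //= deg_i subrr.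
by rewrite subr_eq0 pnatr_eq1; exists i.
Qed.

Lemma one_subX2_neq0 : (1 - 'X ^+ 2 : {poly rat}) != 0.
Proof.
apply/eqP => /(congr1 (coefp 2)) /eqP.
by rewrite /= coefB coef1 coefXn coef0 sub0r oppr_eq0 oner_eq0.
Qed.

Lemma ihara_zeta_dunion_neq k m (H : graph k) (X Y : graph m) :
  num_edges X = num_edges Y -> ihara_det X != ihara_det Y ->
  ihara_zeta (dunion H X) != ihara_zeta (dunion H Y).
Proof.
move=> edges_XY; apply: contraNneq; rewrite /ihara_zeta !num_edges_dunion edges_XY.
set c := (_ ^ _); have c_neq0 : c != 0 by rewrite expfz_neq0 // tofrac_eq0 one_subX2_neq0.
move=> /(mulfI c_neq0) /(congr1 GRing.inv); rewrite !invrK => /eqP.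
by rewrite tofrac_eq !ihara_det_dunion => /eqP /(mulfI (ihara_det_neq0 H)) ->.
Qed.

Lemma lap_cospectral_dunion k m (H : graph k) (X Y : graph m) :
  lap_cospectral X Y -> lap_cospectral (dunion H X) (dunion H Y).
Proof. by rewrite /lap_cospectral !char_poly_laplacian_dunion => /eqP->. Qed.

Lemma char_poly_conj (R : idomainType) n (A B P : 'M[R]_n) :
  \det P != 0 -> P *m A = B *m P -> char_poly A = char_poly B.
Proof.
move=> detP_neq0 PA_BP; pose P' := map_mx (@polyC R) P.
have P'_conj : char_poly_mx B *m P' = P' *m char_poly_mx A.
  rewrite /char_poly_mx mulmxBl mulmxBr -map_mxM -PA_BP map_mxM.
  by rewrite mul_scalar_mx mul_mx_scalar.
have detP'_neq0 : \det P' != 0 by rewrite det_map_mx polyC_eq0.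
apply: (mulIf detP'_neq0).
by rewrite /char_poly mulrC -!det_mulmx P'_conj.
Qed.

Lemma det_neq0_of_mul_scalar (R : idomainType) n (P Q : 'M[R]_n) c :
  c != 0 -> Q *m P = c%:M -> \det P != 0.
Proof.
move=> c_neq0 /(congr1 determinant); rewrite det_mulmx det_scalar => QP_c.
by apply: contra_neq (expf_neq0 n c_neq0) => P0; rewrite -QP_c P0 mulr0.
Qed.

Lemma lap_cospectral_int n (G1 G2 : graph n) :
  char_poly (laplacian int G1) = char_poly (laplacian int G2) -> lap_cospectral G1 G2.
Proof.
have lapE G : laplacian algC G = map_mx intr (laplacian int G).
  by apply/matrixP => i j; rewrite !mxE rmorphB rmorphM /= !rmorph_nat.
by move=> eq12; rewrite /lap_cospectral !lapE -!map_char_poly eq12.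
Qed.

Lemma ihara_det_neq_leaf n (G H : graph n) :
  ~~ [exists i, deg G i == 1%N] -> [exists i, deg H i == 1%N] -> ihara_det G != ihara_det H.
Proof.
rewrite -!ihara_det_top_eq0 => G_top H_top; apply: contraNneq G_top => ->.
exact: H_top.
Qed.

Local Close Scope ring_scope.

(** * Counting the pairs *)

Lemma iso_class_pair_eq n (f : graph n -> nat) (A B A' B' : graph n) :
  (forall G H, graph_iso G H -> f G = f H) ->
  simple_graph A -> simple_graph B -> f B < f A -> f B' < f A' ->
  [set iso_class A; iso_class B] = [set iso_class A'; iso_class B'] ->
  graph_iso A' A /\ graph_iso B' B.
Proof.
move=> f_iso simA simB fBA fBA' eq_pairs.
have mem_pair G : simple_graph G -> iso_class G \in [set iso_class A; iso_class B] ->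
    graph_iso A' G \/ graph_iso B' G.
  move=> simG; rewrite eq_pairs !inE => /orP[] /eqP/(iso_class_iso simG) GH.
    by left.
  by right.
case: (mem_pair A simA (setU11 _ _)) => isoA;
  case: (mem_pair B simB (setU1r _ (set11 _))) => isoB;
  first [by split | by move: (f_iso _ _ isoA) (f_iso _ _ isoB); lia].
Qed.

Definition rep k (c : {set graph k}) : graph k := odflt [ffun=> false] [pick G in c].

Lemma rep_spec k (c : {set graph k}) :
  c \in iso_classes k -> simple_graph (rep c) /\ c = iso_class (rep c).
Proof.
case/imsetP => G; rewrite inE => simG ->; rewrite /rep.
case: pickP => [H|]; last by move/(_ G); rewrite inE simG graph_iso_refl.
by rewrite inE => /andP[simH GH]; split=> //; apply: iso_class_eq.
Qed.

Section CountingPairs.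
Variables (m : nat) (J : finType) (X Y : J -> graph m).
Hypothesis simple_X : forall j, simple_graph (X j).
Hypothesis simple_Y : forall j, simple_graph (Y j).
Hypothesis cospectral_XY : forall j, lap_cospectral (X j) (Y j).
Hypothesis num_edges_XY : forall j, num_edges (X j) = num_edges (Y j).
Hypothesis ihara_det_XY : forall j, ihara_det (X j) != ihara_det (Y j).
Hypothesis deg2_edges_XY : forall j, deg2_edges (Y j) < deg2_edges (X j).
Hypothesis deg2_edges_inj : injective (fun j => deg2_edges (X j) - deg2_edges (Y j)).

Definition dunion_pair k (cj : {set graph k} * J) : {set {set graph (k + m)}} :=
  [set iso_class (dunion (rep cj.1) (X cj.2)); iso_class (dunion (rep cj.1) (Y cj.2))].

Lemma dunion_pair_mem k c j :
  c \in iso_classes k -> dunion_pair (c, j) \in lap_cospec_zeta_pairs (k + m).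
Proof.
case/rep_spec => sim_c _; rewrite inE; apply/existsP; exists (dunion (rep c) (X j)).
apply/existsP; exists (dunion (rep c) (Y j)).
apply/and5P; split; [exact: simple_dunion | exact: simple_dunion | exact/eqP | |].
  exact: lap_cospectral_dunion.
exact: ihara_zeta_dunion_neq.
Qed.

Lemma dunion_pair_inj k : {in setX (iso_classes k) [set: J] &, injective (@dunion_pair k)}.
Proof.
move=> [c j] [c' j']; rewrite !inE /= !andbT => class_c class_c'.
have [sim_c eq_c] := rep_spec class_c; have [sim_c' eq_c'] := rep_spec class_c'.
have deg2_dunion (H : graph k) i : deg2_edges (dunion H (Y i)) < deg2_edges (dunion H (X i)).
  by rewrite !deg2_edges_dunion ltn_add2l.
case/(iso_class_pair_eq (@deg2_edges_iso _)); rewrite ?simple_dunion ?deg2_dunion //.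
move=> /= isoX isoY; have eq_j : j = j'.
  apply: deg2_edges_inj; move: (deg2_edges_XY j) (deg2_edges_XY j').
  move: (deg2_edges_iso isoX) (deg2_edges_iso isoY).
  by rewrite !deg2_edges_dunion; lia.
by subst j'; rewrite eq_c eq_c' (iso_class_eq (dunion_cancel isoX)).
Qed.

Lemma card_lap_cospec_zeta_pairs k :
  #|J| * num_graphs k <= #|lap_cospec_zeta_pairs (k + m)|.
Proof.
rewrite mulnC -cardsT -cardsX -(card_in_imset (@dunion_pair_inj k)).
apply/subset_leq_card/subsetP => S /imsetP[[c j]] /setXP[class_c _] ->.
exact: dunion_pair_mem.
Qed.

End CountingPairs.

(** * The two pairs on six vertices *)

Lemma sum_ord_iota n (F : nat -> nat) : \sum_(i < n) F i = sumn [seq F i | i <- iota 0 n].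
Proof. by rewrite -(big_mkord xpredT) /index_iota subn0 sumnE big_map. Qed.

Lemma card_ord_pairs n (P : nat -> nat -> bool) :
  #|[set p : 'I_n * 'I_n | P p.1 p.2]| = sumn [seq count (P a) (iota 0 n) | a <- iota 0 n].
Proof.
rewrite card_pairs (sum_ord_iota n (fun a => \sum_(j < n) P a j)); congr sumn.
apply: eq_map => a.
by rewrite (sum_ord_iota n (fun b => P a b)) sumn_count.
Qed.

Lemma exists_ord_iota n (P : pred nat) : [exists i : 'I_n, P i] = has P (iota 0 n).
Proof.
apply/existsP/hasP => [[i Pi] | [a]]; first by exists (val i); rewrite ?mem_iota /=.
by rewrite mem_iota => lt_a Pa; exists (Ordinal lt_a).
Qed.

Lemma forall_ord_iota n (P : pred nat) : [forall i : 'I_n, P i] = all P (iota 0 n).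
Proof.
apply/forallP/allP => [P_ord a | P_iota i]; last by apply: P_iota; rewrite mem_iota /=.
by rewrite mem_iota => lt_a; exact: (P_ord (Ordinal lt_a)).
Qed.

(* Graphs given by edge lists over nat, and their invariants rewritten as list
   computations: finfun and finset are locked, so only these reduce under vm_compute. *)
Definition edge_rel (l : seq (nat * nat)) : rel nat :=
  fun a b => ((a, b) \in l) || ((b, a) \in l).

Definition edge_graph n (l : seq (nat * nat)) : graph n :=
  [ffun p : 'I_n * 'I_n => edge_rel l p.1 p.2].

Definition edge_deg n l a := count (edge_rel l a) (iota 0 n).

Section EdgeGraph.
Variables (n : nat) (l : seq (nat * nat)).

Lemma adj_edge_graph i j : adj (edge_graph n l) i j = edge_rel l i j.
Proof. by rewrite /adj ffunE. Qed.

Lemma deg_edge_graph i : deg (edge_graph n l) i = edge_deg n l i.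
Proof.
rewrite degE (eq_bigr (fun j : 'I_n => edge_rel l i j : nat)) => [|j _]; last first.
  by rewrite adj_edge_graph.
by rewrite (sum_ord_iota n (fun j => edge_rel l i j)) sumn_count.
Qed.

Lemma simple_edge_graph :
  all (fun a => ~~ edge_rel l a a) (iota 0 n) -> simple_graph (edge_graph n l).
Proof.
rewrite -forall_ord_iota => /forallP loopless; apply/andP; split; apply/forallP => i.
  by apply/forallP => j; rewrite !adj_edge_graph /edge_rel orbC.
by rewrite adj_edge_graph; exact: loopless.
Qed.

Lemma num_edges_edge_graph :
  num_edges (edge_graph n l) =
  sumn [seq count (fun b => edge_rel l a b && (a < b)) (iota 0 n) | a <- iota 0 n].
Proof.
rewrite /num_edges -(card_ord_pairs n (fun a b => edge_rel l a b && (a < b))).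
by apply: eq_card => p; rewrite !inE adj_edge_graph.
Qed.

Lemma deg2_edges_edge_graph :
  deg2_edges (edge_graph n l) =
  sumn [seq count (fun b => [&& edge_rel l a b, edge_deg n l a == 2 & edge_deg n l b == 2])
              (iota 0 n) | a <- iota 0 n].
Proof.
rewrite /deg2_edges /edges_by_deg -card_ord_pairs.
by apply: eq_card => p; rewrite !inE adj_edge_graph !deg_edge_graph andbA.
Qed.

Lemma leaf_edge_graph :
  [exists i, deg (edge_graph n l) i == 1] = has (fun a => edge_deg n l a == 1) (iota 0 n).
Proof.
rewrite -exists_ord_iota; apply: eq_existsb => i.
by rewrite deg_edge_graph.
Qed.

End EdgeGraph.

Local Open Scope ring_scope.

Section NatIndexedMatrices.
Variables (R : pzSemiRingType) (n : nat).

Definition nat_mx (f : nat -> nat -> R) : 'M[R]_n := \matrix_(i, j) f i j.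

Lemma nat_mx_eq (f g : nat -> nat -> R) :
  all (fun a => all (fun b => f a b == g a b) (iota 0 n)) (iota 0 n) ->
  nat_mx f = nat_mx g.
Proof.
rewrite -forall_ord_iota => /forallP fg; apply/matrixP => i j; rewrite !mxE.
by move: (fg i); rewrite -forall_ord_iota => /forallP/(_ j)/eqP.
Qed.

Lemma mul_nat_mx (f g : nat -> nat -> R) :
  nat_mx f *m nat_mx g =
  nat_mx (fun a b => foldr (fun c s => f a c * g c b + s) 0 (iota 0 n)).
Proof.
apply/matrixP => i j; rewrite /nat_mx !mxE.
rewrite (eq_bigr (fun c : 'I_n => f i c * g c j)) => [|c _]; last by rewrite !mxE.
rewrite -(big_mkord xpredT (fun c => f i c * g c j)).
by rewrite /index_iota subn0; elim: (iota 0 n) => [|c s IHs]; rewrite ?big_nil ?big_cons ?IHs.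
Qed.

Lemma scalar_nat_mx c : c%:M = nat_mx (fun a b => if a == b then c else 0) :> 'M_n.
Proof. by apply/matrixP => i j; rewrite /nat_mx !mxE -val_eqE; case: eqP. Qed.

End NatIndexedMatrices.

Lemma laplacian_edge_graph n l :
  laplacian int (edge_graph n l) =
  nat_mx n (fun a b => (a == b)%:R * (edge_deg n l a)%:R - (edge_rel l a b)%:R).
Proof. by apply/matrixP => i j; rewrite !mxE deg_edge_graph adj_edge_graph. Qed.

Definition edges_X (b : bool) : seq (nat * nat) :=
  if b then [:: (0, 1); (0, 2); (0, 3); (0, 5); (1, 5); (2, 3); (2, 4); (3, 4)]
  else [:: (0, 2); (0, 3); (0, 4); (0, 5); (1, 4); (1, 5); (2, 3)].

Definition edges_Y (b : bool) : seq (nat * nat) :=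
  if b then [:: (0, 3); (0, 4); (0, 5); (1, 2); (1, 3); (1, 4); (2, 3); (2, 4)]
  else [:: (0, 2); (0, 4); (0, 5); (1, 2); (1, 4); (1, 5); (2, 3)].

Definition graph_X b := edge_graph 6 (edges_X b).
Definition graph_Y b := edge_graph 6 (edges_Y b).

(* [P b *m L(graph_X b) = L(graph_Y b) *m P b] and [Q b *m P b = 4%:M]. *)
Definition mx_P (b : bool) : seq (seq int) :=
  if b then
    [:: [:: 1; 1; 0; 0; 1; -1]; [:: 1; 0; -1; 1; 0; 1]; [:: 1; 0; 1; -1; 0; 1];
        [:: 0; 1; 1; 1; -1; 0]; [:: -1; 1; 0; 0; 1; 1]; [:: 0; -1; 1; 1; 1; 0]]
  else
    [:: [:: 0; 1; -1; 0; -1; -1]; [:: 1; -1; -1; -1; 0; 0]; [:: -1; -1; -1; 1; 0; 0];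
        [:: 0; -1; 1; 0; -1; -1]; [:: -1; 0; 0; -1; -1; 1]; [:: -1; 0; 0; -1; 1; -1]].

Definition mx_Q (b : bool) : seq (seq int) :=
  if b then
    [:: [:: 1; 1; 1; 0; -1; 0]; [:: 1; 0; 0; 1; 1; -1]; [:: 0; -1; 1; 1; 0; 1];
        [:: 0; 1; -1; 1; 0; 1]; [:: 1; 0; 0; -1; 1; 1]; [:: -1; 1; 1; 0; 1; 0]]
  else mx_P false.

Definition seq_entry (s : seq (seq int)) a b := nth 0 (nth [::] s a) b.

Lemma lap_cospectral_graph_XY b : lap_cospectral (graph_X b) (graph_Y b).
Proof.
apply: lap_cospectral_int; rewrite !laplacian_edge_graph.
apply: (@char_poly_conj _ _ _ _ (nat_mx 6 (seq_entry (mx_P b)))).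
  apply: (@det_neq0_of_mul_scalar _ _ _ (nat_mx 6 (seq_entry (mx_Q b))) 4) => //.
  by rewrite mul_nat_mx scalar_nat_mx; apply: nat_mx_eq; case: b; vm_compute.
by rewrite !mul_nat_mx; apply: nat_mx_eq; case: b; vm_compute.
Qed.

Local Close Scope ring_scope.

Lemma simple_graph_X b : simple_graph (graph_X b).
Proof. by apply: simple_edge_graph; case: b; vm_compute. Qed.

Lemma simple_graph_Y b : simple_graph (graph_Y b).
Proof. by apply: simple_edge_graph; case: b; vm_compute. Qed.

Lemma num_edges_graph_XY b : num_edges (graph_X b) = num_edges (graph_Y b).
Proof. by rewrite !num_edges_edge_graph; case: b; vm_compute. Qed.

Lemma ihara_det_graph_XY b : (ihara_det (graph_X b) != ihara_det (graph_Y b))%R.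
Proof. by apply: ihara_det_neq_leaf; rewrite !leaf_edge_graph; case: b; vm_compute. Qed.

Lemma deg2_edges_graph_X b : deg2_edges (graph_X b) = if b then 2 else 6.
Proof. by rewrite deg2_edges_edge_graph; case: b; vm_compute. Qed.

Lemma deg2_edges_graph_Y b : deg2_edges (graph_Y b) = 0.
Proof. by rewrite deg2_edges_edge_graph; case: b; vm_compute. Qed.

Theorem corollary4p8 (n : nat) :
  (6 <= n)%N -> (2 * num_graphs (n - 6) <= #|lap_cospec_zeta_pairs n|)%N.
Proof.
move=> le6n; have [k ->] : exists k, n = k + 6 by exists (n - 6); rewrite subnK.
rewrite addnK -[X in X * _]card_bool.
apply: (@card_lap_cospec_zeta_pairs _ _ graph_X graph_Y).
- exact: simple_graph_X.
- exact: simple_graph_Y.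
- exact: lap_cospectral_graph_XY.
- exact: num_edges_graph_XY.
- exact: ihara_det_graph_XY.
- by move=> b; rewrite deg2_edges_graph_X deg2_edges_graph_Y; case: b.
by move=> [] []; rewrite /= !deg2_edges_graph_X !deg2_edges_graph_Y.
Qed.
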